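(* There is a functor $\mathrm{Coll}:\mathbf{OpCat}\to\mathbf{SkewMonCat}$ sending an operadic category $\mathcal C$ to the skew monoidal category $\mathrm{Coll}_{\mathcal C}(\mathbf{Set})$. Moreover, an operadic category $\mathcal C$ is a genuine operadic category if and only if the left unit constraint $\lambda$ of $\mathrm{Coll}_{\mathcal C}(\mathbf{Set})$ is invertible.
   Context: Operadic categories: $\mathcal S$ is a skeleton of finite sets (objects $\mathbb N$), with fixed equivalences $R_I:\mathcal S/I\to\mathcal S^I$ sending $f:J\to I$ to its fibres. An operadic category is a category $\mathcal C$ with a functor $|\cdot|:\mathcal C\to\mathcal S$ and functors $R_c:\mathcal C/c\to\mathcal C^{|c|}$ with $|\cdot|^{|c|}\circ R_c=R_{|c|}\circ(|\cdot|/c)$; the fibre $\psi^{-1}i$ of $\psi:c\to d$ at $i\in|d|$ is the $i$-th component of $R_d(\psi)$; for $\varphi:b\to c,\psi:c\to d$, $\varphi^\psi=R_d(\varphi:\psi\varphi\to\psi)$ with components $\varphi^\psi_j:(\psi\varphi)^{-1}j\to\psi^{-1}j$; $u$ is trivial if $|u|=1$ and $R_u=\mathrm{dom}$. Axioms: fibres of identities are trivial; double slice condition: for $\psi:c\to d$, $R_c\circ(\mathrm{dom}/\psi)=(\cong)\circ(\prod_jR_{\psi^{-1}j})\circ(R_d/\psi)$ as functors $(\mathcal C/d)/\psi\to\mathcal C^{|c|}$, via $\mathcal C^{|d|}/R_d\psi\cong\prod_j\mathcal C/\psi^{-1}j$ and $|c|\cong\sum_j|\psi|^{-1}j$. A strict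 operadic functor $F:\mathcal C\to\mathcal D$ is a functor with $|F(-)|=|-|$ and $R_{Fc}\circ(F/c)=F^{|c|}\circ R_c$ for all $c$. $\mathbf{OpCat}$ is the category of operadic categories and strict operadic functors. An operadic category is genuine if each connected component contains exactly one trivial object and that object is terminal in the component. $\mathrm{Coll}_{\mathcal C}(\mathbf{Set})$: with $C$ the object set of $\mathcal C$, the underlying category is $\mathbf{Set}/C$ (objects $\partial:X\to C$, $X_c=\partial^{-1}c$); $(X*Y)_c=\sum_{\varphi:c\to d}X_d\times\prod_{i\in|d|}Y_{\varphi^{-1}i}$ (elements $(x,\varphi,y)$); unit $U$ = set of trivial objects; $\alpha(x,\psi,y,\varphi,z)=(x,\psi\varphi,y,\varphi^\psi,z)$, $\lambda(u,\varphi,x)=x$, $\rho(x)=(x,1_{\partial x},(1_{\partial x}^{-1}i)_i)$. This is a skew monoidal category: a category with tensor $*$, unit $U$, and natural maps $\alpha:(X*Y)*Z\to X*(Y*Z)$, $\lambda:U*X\to X$, $\rho:X\to X*U$ (not necessarily invertible) satisfying the five coherence axioms $\lambda_U\rho_U=1$, $\lambda\alpha=\lambda*1$, $\alpha\rho=1*\rho$, $(1*\lambda)\alpha(\rho*1)=1$, and the pentagon. $\mathbf{SkewMonCat}$ has skew monoidal categories as objects and opmonoidal functors as morphisms: an opmonoidal functor $(\mathcal E,*,U)\to(\mathcal F,*,V)$ is a functor $F$ with natural $F^2:F(X*Y)\to FX*FY$ and $F^0:FU\to V$ such that $\alpha\circ(F^2*1)\circ F^2=(1*F^2)\circ F^2\circ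 F\alpha$, $\lambda\circ(F^0*1)\circ F^2=F\lambda$, and $(1*F^0)\circ F^2\circ F\rho=\rho$. *)

From HB Require Import structures.
From mathcomp Require Import all_boot.

Set Implicit Arguments.
Unset Strict Implicit.
Unset Printing Implicit Defensive.

(* The skeleton S of finite sets: objects are n : nat (= {0,..,n-1}); a     *)
(* morphism m -> n is represented by a function f : nat -> nat of which     *)
(* only the values on [0, m) matter (they lie in [0, n)).  The fixed        *)
(* equivalence R_I : S/I -> S^I sends f : J -> I to its fibres, each fibre   *)
(* f^{-1}(i) being identified with a finite ordinal ORDER-PRESERVINGLY.     *)

Definition sfib (f : nat -> nat) (m i : nat) : seq nat :=
  [seq j <- iota 0 m | f j == i].

(* position of j in its fibre f^{-1}(f j): this is the canonical bijection
   m = sum_i |f^{-1}(i)| *)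
Definition spos (f : nat -> nat) (m j : nat) : nat := index j (sfib f m (f j)).

(* Operadic categories.  A category is presented by its set of objects and  *)
(* its set of arrows with dom/cod, identities and composition (comp g f is  *)
(* g o f; it is only meaningful when cod f = dom g).                        *)
(*   ar c        = |c|                                                      *)
(*   am f        = |f| : |dom f| -> |cod f|                                 *)
(*   fib psi i   = psi^{-1} i      (i-th component of R_d(psi))             *)
(*   fibm psi phi i = phi^psi_i : (psi phi)^{-1} i -> psi^{-1} i            *)
(*                  (i-th component of R_d(phi : psi phi -> psi))           *)

Record OpCatData := {
  Ob : Type;
  Arr : Type;
  dom : Arr -> Ob;
  cod : Arr -> Ob;
  idA : Ob -> Arr;
  comp : Arr -> Arr -> Arr;
  ar : Ob -> nat;
  am : Arr -> nat -> nat;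
  fib : Arr -> nat -> Ob;
  fibm : Arr -> Arr -> nat -> Arr
}.

Section OpCatAxioms.
Variable C : OpCatData.

(* u is trivial: |u| = 1 and R_u = dom *)
Definition is_trivial (u : Ob C) : Prop :=
  ar u = 1 /\
  (forall psi : Arr C, cod psi = u -> fib psi 0 = dom psi) /\
  (forall psi phi : Arr C, cod psi = u -> cod phi = dom psi -> fibm psi phi 0 = phi).

Record is_opcat : Prop := {
  ax_dom_id : forall c : Ob C, dom (idA c) = c;
  ax_cod_id : forall c : Ob C, cod (idA c) = c;
  ax_dom_comp : forall (g : Arr C) f, cod f = dom g -> dom (comp g f) = dom f;
  ax_cod_comp : forall (g : Arr C) f, cod f = dom g -> cod (comp g f) = cod g;
  ax_comp_id_r : forall f : Arr C, comp f (idA (dom f)) = f;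
  ax_comp_id_l : forall f : Arr C, comp (idA (cod f)) f = f;
  ax_comp_assoc : forall (h g : Arr C) f, cod f = dom g -> cod g = dom h ->
      comp h (comp g f) = comp (comp h g) f;
  ax_am_range : forall (f : Arr C) j, j < ar (dom f) -> am f j < ar (cod f);
  ax_am_id : forall (c : Ob C) j, j < ar c -> am (idA c) j = j;
  ax_am_comp : forall (g f : Arr C) j, cod f = dom g -> j < ar (dom f) ->
      am (comp g f) j = am g (am f j);
  (* R_d : C/d -> C^{|d|} is a functor *)
  ax_dom_fibm : forall (psi phi : Arr C) i, cod phi = dom psi -> i < ar (cod psi) ->
      dom (fibm psi phi i) = fib (comp psi phi) i;
  ax_cod_fibm : forall (psi phi : Arr C) i, cod phi = dom psi -> i < ar (cod psi) ->
      cod (fibm psi phi i) = fib psi i;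
  ax_fibm_id : forall (psi : Arr C) i, i < ar (cod psi) ->
      fibm psi (idA (dom psi)) i = idA (fib psi i);
  ax_fibm_comp : forall (psi phi chi : Arr C) i,
      cod phi = dom psi -> cod chi = dom phi -> i < ar (cod psi) ->
      fibm psi (comp phi chi) i = comp (fibm psi phi i) (fibm (comp psi phi) chi i);
  (* |.|^{|d|} o R_d = R_{|d|} o (|.|/d) *)
  ax_ar_fib : forall (psi : Arr C) i, i < ar (cod psi) ->
      ar (fib psi i) = size (sfib (am psi) (ar (dom psi)) i);
  ax_am_fibm : forall (psi phi : Arr C) i k, cod phi = dom psi -> i < ar (cod psi) ->
      k < ar (fib (comp psi phi) i) ->
      am (fibm psi phi i) k =
      index (am phi (nth 0 (sfib (am (comp psi phi)) (ar (dom phi)) i) k))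
            (sfib (am psi) (ar (dom psi)) i);
  ax_fib_id_trivial : forall (c : Ob C) i, i < ar c -> is_trivial (fib (idA c) i);
  (* double slice condition, on objects of (C/d)/psi ... *)
  ax_ds_ob : forall (psi phi : Arr C) j, cod phi = dom psi -> j < ar (dom psi) ->
      fib phi j = fib (fibm psi phi (am psi j)) (spos (am psi) (ar (dom psi)) j);
  (* ... and on morphisms sigma : phi sigma -> phi of (C/d)/psi *)
  ax_ds_mor : forall (psi phi sigma : Arr C) j,
      cod phi = dom psi -> cod sigma = dom phi -> j < ar (dom psi) ->
      fibm phi sigma j =
      fibm (fibm psi phi (am psi j)) (fibm (comp psi phi) sigma (am psi j))
           (spos (am psi) (ar (dom psi)) j)
}.

Inductive connected : Ob C -> Ob C -> Prop :=
  | conn_refl c : connected c c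
  | conn_arr f : connected (dom f) (cod f)
  | conn_sym a b : connected a b -> connected b a
  | conn_trans a b c : connected a b -> connected b c -> connected a c.

Definition genuine : Prop :=
  forall c : Ob C, exists u : Ob C,
    [/\ connected c u, is_trivial u,
        (forall u', connected c u' -> is_trivial u' -> u' = u) &
        (forall c', connected c' u -> exists! f : Arr C, dom f = c' /\ cod f = u)].

End OpCatAxioms.

Record OpCat := { ocd :> OpCatData; ocax : is_opcat ocd }.

Definition is_strict (C D : OpCatData) (Fo : Ob C -> Ob D) (Fa : Arr C -> Arr D)
  : Prop :=
  [/\ (forall f, dom (Fa f) = Fo (dom f) /\ cod (Fa f) = Fo (cod f)),
      (forall c, Fa (idA c) = idA (Fo c)),
      (forall g f, cod f = dom g -> Fa (comp g f) = comp (Fa g) (Fa f)),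
      (forall c, ar (Fo c) = ar c) /\
      (forall f j, j < ar (dom f) -> am (Fa f) j = am f j) &
      (forall psi i, i < ar (cod psi) -> fib (Fa psi) i = Fo (fib psi i)) /\
      (forall psi phi i, cod phi = dom psi -> i < ar (cod psi) ->
          fibm (Fa psi) (Fa phi) i = Fa (fibm psi phi i))].

Record SOpFun (C D : OpCat) := {
  sfo : Ob C -> Ob D;
  sfa : Arr C -> Arr D;
  sfax : is_strict sfo sfa }.

Lemma idSF_ax (C : OpCat) : is_strict (fun c : Ob C => c) (fun f : Arr C => f).
Proof. by split. Qed.

Definition idSF (C : OpCat) : SOpFun C C := Build_SOpFun (idSF_ax C).

Lemma compSF_ax (C D E : OpCat) (G : SOpFun D E) (F : SOpFun C D) :
  is_strict (fun c => sfo G (sfo F c)) (fun f => sfa G (sfa F f)).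
Proof.
case: (sfax F) => Fdc Fid Fcomp [Far Fam] [Ffib Ffibm].
case: (sfax G) => Gdc Gid Gcomp [Gar Gam] [Gfib Gfibm].
split.
- by move=> f; case: (Fdc f) => d1 c1; case: (Gdc (sfa F f)) => d2 c2;
    rewrite d2 c2 d1 c1.
- by move=> c; rewrite Fid Gid.
- move=> g f e; rewrite Fcomp // Gcomp //.
  by case: (Fdc f) => _ ->; case: (Fdc g) => -> _; rewrite e.
- split; first by move=> c; rewrite Gar Far.
  move=> f j lt; rewrite Gam ?Fam //.
  by case: (Fdc f) => -> _; rewrite Far.
- split.
    move=> psi i lt; rewrite Gfib ?Ffib //.
    by case: (Fdc psi) => _ ->; rewrite Far.
  move=> psi phi i e lt; rewrite Gfibm ?Ffibm //.
  + by case: (Fdc psi) => -> _; case: (Fdc phi) => _ ->; rewrite e.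
  + by case: (Fdc psi) => _ ->; rewrite Far.
Qed.

Definition compSF (C D E : OpCat) (G : SOpFun D E) (F : SOpFun C D) : SOpFun C E :=
  Build_SOpFun (compSF_ax G F).

Record SkewData := {
  sObj : Type;
  sHom : sObj -> sObj -> Type;
  sid : forall X, sHom X X;
  scomp : forall X Y Z, sHom Y Z -> sHom X Y -> sHom X Z;
  sten : sObj -> sObj -> sObj;
  stenm : forall X X' Y Y', sHom X X' -> sHom Y Y' -> sHom (sten X Y) (sten X' Y');
  sU : sObj;
  salpha : forall X Y Z, sHom (sten (sten X Y) Z) (sten X (sten Y Z));
  slam : forall X, sHom (sten sU X) X;
  srho : forall X, sHom X (sten X sU)
}.

Arguments sid {s} X.
Arguments scomp {s X Y Z} g f.
Arguments sten {s} X Y.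
Arguments stenm {s X X' Y Y'} f g.
Arguments sU {s}.
Arguments salpha {s} X Y Z.
Arguments slam {s} X.
Arguments srho {s} X.

Record is_skew_monoidal (S : SkewData) : Prop := {
  sk_id_r : forall (X Y : sObj S) (f : sHom X Y), scomp f (sid X) = f;
  sk_id_l : forall (X Y : sObj S) (f : sHom X Y), scomp (sid Y) f = f;
  sk_assoc : forall (X Y Z W : sObj S) (f : sHom X Y) (g : sHom Y Z) (h : sHom Z W),
      scomp h (scomp g f) = scomp (scomp h g) f;
  sk_ten_id : forall X Y : sObj S, stenm (sid X) (sid Y) = sid (sten X Y);
  sk_ten_comp : forall (X X' X'' Y Y' Y'' : sObj S) (f : sHom X X') (f' : sHom X' X'')
      (g : sHom Y Y') (g' : sHom Y' Y''),
      stenm (scomp f' f) (scomp g' g) = scomp (stenm f' g') (stenm f g);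
  sk_alpha_nat : forall (X X' Y Y' Z Z' : sObj S) (f : sHom X X') (g : sHom Y Y') (h : sHom Z Z'),
      scomp (stenm f (stenm g h)) (salpha X Y Z)
      = scomp (salpha X' Y' Z') (stenm (stenm f g) h);
  sk_lam_nat : forall (X Y : sObj S) (f : sHom X Y),
      scomp f (slam X) = scomp (slam Y) (stenm (sid sU) f);
  sk_rho_nat : forall (X Y : sObj S) (f : sHom X Y),
      scomp (srho Y) f = scomp (stenm f (sid sU)) (srho X);
  sk_lam_rho : scomp (slam sU) (srho sU) = sid (@sU S);
  sk_lam_alpha : forall Y Z : sObj S,
      scomp (slam (sten Y Z)) (salpha sU Y Z) = stenm (slam Y) (sid Z);
  sk_alpha_rho : forall X Y : sObj S,
      scomp (salpha X Y sU) (srho (sten X Y)) = stenm (sid X) (srho Y);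
  sk_triangle : forall X Y : sObj S,
      scomp (stenm (sid X) (slam Y)) (scomp (salpha X sU Y) (stenm (srho X) (sid Y)))
      = sid (sten X Y);
  sk_pentagon : forall W X Y Z : sObj S,
      scomp (salpha W X (sten Y Z)) (salpha (sten W X) Y Z)
      = scomp (stenm (sid W) (salpha X Y Z))
          (scomp (salpha W (sten X Y) Z) (stenm (salpha W X Y) (sid Z)))
}.

Record OpMonData (S T : SkewData) := {
  fo : sObj S -> sObj T;
  fm : forall X Y, sHom X Y -> sHom (fo X) (fo Y);
  f2 : forall X Y, sHom (fo (sten X Y)) (sten (fo X) (fo Y));
  f0 : sHom (fo sU) sU
}.

Arguments fm {S T} o {X Y} _.
Arguments f2 {S T} o X Y.
Arguments f0 {S T} o.

Record is_opmonoidal (S T : SkewData) (F : OpMonData S T) : Prop := {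
  om_id : forall X : sObj S, fm F (sid X) = sid (fo F X);
  om_comp : forall (X Y Z : sObj S) (f : sHom X Y) (g : sHom Y Z),
      fm F (scomp g f) = scomp (fm F g) (fm F f);
  om_f2_nat : forall (X X' Y Y' : sObj S) (f : sHom X X') (g : sHom Y Y'),
      scomp (f2 F X' Y') (fm F (stenm f g)) = scomp (stenm (fm F f) (fm F g)) (f2 F X Y);
  om_alpha : forall X Y Z : sObj S,
      scomp (salpha (fo F X) (fo F Y) (fo F Z))
        (scomp (stenm (f2 F X Y) (sid (fo F Z))) (f2 F (sten X Y) Z))
      = scomp (stenm (sid (fo F X)) (f2 F Y Z))
          (scomp (f2 F X (sten Y Z)) (fm F (salpha X Y Z)));
  om_lam : forall X : sObj S,
      scomp (slam (fo F X)) (scomp (stenm (f0 F) (sid (fo F X))) (f2 F sU X))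
      = fm F (slam X);
  om_rho : forall X : sObj S,
      scomp (stenm (sid (fo F X)) (f0 F)) (scomp (f2 F X sU) (fm F (srho X)))
      = srho (fo F X)
}.

Definition idOpMon (S : SkewData) : OpMonData S S :=
  {| fo := fun X => X; fm := fun X Y f => f;
     f2 := fun X Y => sid (sten X Y); f0 := sid sU |}.

Definition compOpMon (S T W : SkewData) (G : OpMonData T W) (F : OpMonData S T)
  : OpMonData S W :=
  {| fo := fun X => fo G (fo F X);
     fm := fun X Y f => fm G (fm F f);
     f2 := fun X Y => scomp (f2 G (fo F X) (fo F Y)) (fm G (f2 F X Y));
     f0 := scomp (f0 G) (fm G (f0 F)) |}.

Definition is_iso (S : SkewData) (X Y : sObj S) (f : sHom X Y) : Prop :=
  exists g : sHom Y X, scomp g f = sid X /\ scomp f g = sid Y.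

Definition lambda_invertible (S : SkewData) : Prop :=
  forall X : sObj S, is_iso (slam X).

(* objects of Set/C: a set X with a map d : X -> C (X_c = d^{-1} c) *)
Set Primitive Projections.
Record CObj (C : OpCatData) := CO { car : Type; bd : car -> Ob C }.
Record CHom (C : OpCatData) (X Y : CObj C) :=
  CH { hfun : car X -> car Y; hbd : forall x, @bd C Y (hfun x) = @bd C X x }.
Unset Primitive Projections.
Arguments CO {C} car bd.
Arguments car {C} c.
Arguments bd {C} c _.
Arguments CH {C X Y} hfun hbd.
Arguments hfun {C X Y} c _.
Arguments hbd {C X Y} c x.

(* an element (x, phi, y) of (X * Y)_c: phi : c -> d, x in X_d and
   y = (y_i)_{i in |d|} with y_i in Y_{phi^{-1} i}; its boundary is c = dom phi *)
Record TElt (C : OpCatData) (X Y : CObj C) := TE {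
  tx : car X;
  tphi : Arr C;
  ty : seq (car Y);
  tcod : @bd C X tx = cod tphi;
  tfib : map (@bd C Y) ty = mkseq (fib tphi) (ar (cod tphi)) }.
Arguments TE {C X Y} tx tphi ty tcod tfib.

Definition ten (C : OpCatData) (X Y : CObj C) : CObj C :=
  CO (TElt X Y) (fun t => dom (tphi t)).

Section Coll.
Variable C : OpCat.
Let A := ocax C.

Definition CidH (X : CObj C) : CHom X X := CH (fun x => x) (fun x => erefl).

Definition CcompH (X Y Z : CObj C) (g : CHom Y Z) (f : CHom X Y) : CHom X Z :=
  CH (fun x => hfun g (hfun f x)) (fun x => etrans (hbd g (hfun f x)) (hbd f x)).

Lemma tenm_fib (X X' Y Y' : CObj C) (f : CHom X X') (g : CHom Y Y') (t : TElt X Y) :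
  map (bd Y') (map (hfun g) (ty t)) = mkseq (fib (tphi t)) (ar (cod (tphi t))).
Proof. by rewrite -map_comp (eq_map (hbd g)) tfib. Qed.

Definition tenm_fun (X X' Y Y' : CObj C) (f : CHom X X') (g : CHom Y Y')
  (t : TElt X Y) : TElt X' Y' :=
  TE (hfun f (tx t)) (tphi t) (map (hfun g) (ty t))
     (etrans (hbd f (tx t)) (tcod t)) (tenm_fib f g t).

Definition tenm (X X' Y Y' : CObj C) (f : CHom X X') (g : CHom Y Y')
  : CHom (ten X Y) (ten X' Y') :=
  @CH C (ten X Y) (ten X' Y') (tenm_fun f g) (fun t => erefl).

Definition CU : CObj C := CO {u : Ob C | is_trivial u} (fun u => sval u).

(* lambda (u, phi, x) = x *)
Lemma lam_size (X : CObj C) (t : TElt CU X) : 0 < size (ty t).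
Proof.
have := congr1 size (tfib t); rewrite size_map size_mkseq => ->.
by case: (svalP (tx t)) => h _; rewrite -(tcod t) /= h.
Qed.

Definition lam_fun (X : CObj C) (t : TElt CU X) : car X :=
  tnth (in_tuple (ty t)) (Ordinal (lam_size t)).

Lemma lam_bd (X : CObj C) (t : TElt CU X) : bd X (lam_fun t) = dom (tphi t).
Proof.
have triv : is_trivial (cod (tphi t)) by rewrite -(tcod t); exact: svalP.
case: triv => h1 [h2 _].
rewrite /lam_fun (tnth_nth (lam_fun t)) /= -(h2 _ erefl).
rewrite -(nth_map _ (bd X (lam_fun t))) ?lam_size // tfib nth_mkseq //.
by rewrite h1.
Qed.

Definition lam (X : CObj C) : CHom (ten CU X) X := @CH C (ten CU X) X (@lam_fun X) (@lam_bd X).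

(* rho x = (x, 1, (1^{-1} i)_i) *)
Definition rho_seq (c : Ob C) : seq (car CU) :=
  map (fun i : 'I_(ar c) =>
         exist (fun u => is_trivial u) (fib (idA c) i) (ax_fib_id_trivial A (ltn_ord i)))
      (enum 'I_(ar c)).

Lemma rho_cod (X : CObj C) (x : car X) : bd X x = cod (idA (bd X x)).
Proof. by rewrite ax_cod_id. Qed.

Lemma rho_fib (c : Ob C) :
  map (bd CU) (rho_seq c) = mkseq (fib (idA c)) (ar (cod (idA c))).
Proof.
rewrite /rho_seq -map_comp ax_cod_id // /mkseq -val_enum_ord -map_comp.
by apply: eq_map.
Qed.

Definition rho_fun (X : CObj C) (x : car X) : TElt X CU :=
  TE x (idA (bd X x)) (rho_seq (bd X x)) (rho_cod x) (rho_fib (bd X x)).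

Definition rho (X : CObj C) : CHom X (ten X CU) :=
  @CH C X (ten X CU) (@rho_fun X) (fun x => ax_dom_id A (bd X x)).

(* alpha (x, psi, y, phi, z) = (x, psi phi, y, phi^psi, z) *)
Section Alpha.
Variables X Y Z : CObj C.
Variable t : TElt (ten X Y) Z.
Let s := tx t.
Let psi := tphi s.
Let phi := tphi t.
Let y := ty s.
Let z := ty t.

Lemma al_e : cod phi = dom psi.
Proof. by rewrite -(tcod t). Qed.

Lemma al_size_y : size y = ar (cod psi).
Proof. by have := congr1 size (tfib s); rewrite size_map size_mkseq. Qed.

Lemma al_size_z : size z = ar (dom psi).
Proof.
by have := congr1 size (tfib t); rewrite size_map size_mkseq -al_e.
Qed.

(* the part of z lying over the fibre |psi|^{-1} i, in increasing order *)
Definition al_zmask (i : nat) : seq (car Z) :=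
  mask [seq am psi j == i | j <- iota 0 (size z)] z.

Lemma al_ar (i : 'I_(size y)) : i < ar (cod psi).
Proof. by rewrite -al_size_y. Qed.

Lemma al_q1 (i : 'I_(size y)) :
  bd Y (tnth (in_tuple y) i) = cod (fibm psi phi i).
Proof.
have lt := al_ar i.
rewrite (ax_cod_fibm A al_e lt) (tnth_nth (tnth (in_tuple y) i)) /=.
rewrite -(nth_map _ (bd Y (tnth (in_tuple y) i))) // /y tfib nth_mkseq //.
Qed.

Lemma al_fibs (i : nat) : i < ar (cod psi) ->
  map (fib phi) (sfib (am psi) (ar (dom psi)) i)
  = mkseq (fib (fibm psi phi i)) (ar (cod (fibm psi phi i))).
Proof.
move=> lt; rewrite (ax_cod_fibm A al_e lt) (ax_ar_fib A lt).
apply: (@eq_from_nth _ (fib phi 0)); first by rewrite size_map size_mkseq.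
move=> k; rewrite size_map => hk.
rewrite (nth_map 0) // nth_mkseq //.
set j := nth 0 _ k.
have jS : j \in sfib (am psi) (ar (dom psi)) i by exact: mem_nth.
move: (jS); rewrite mem_filter mem_iota add0n => /andP [/eqP hj /andP [_ jlt]].
rewrite (ax_ds_ob A al_e jlt) /spos hj index_uniq //.
by rewrite filter_uniq // iota_uniq.
Qed.

Lemma al_q2 (i : 'I_(size y)) :
  map (bd Z) (al_zmask i) = mkseq (fib (fibm psi phi i)) (ar (cod (fibm psi phi i))).
Proof.
have lt := al_ar i.
rewrite /al_zmask map_mask /z tfib -/phi -/z al_size_z al_e /mkseq.
rewrite -map_mask -filter_mask -/(sfib (am psi) (ar (dom psi)) i).
exact: al_fibs.
Qed.

Definition al_w : seq (car (ten Y Z)) :=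
  map (fun i : 'I_(size y) =>
         TE (tnth (in_tuple y) i) (fibm psi phi i) (al_zmask i) (al_q1 i) (al_q2 i))
      (enum 'I_(size y)).

Lemma al_cod : bd X (tx s) = cod (comp psi phi).
Proof. by rewrite (ax_cod_comp A al_e) (tcod s). Qed.

Lemma al_fib : map (bd (ten Y Z)) al_w = mkseq (fib (comp psi phi)) (ar (cod (comp psi phi))).
Proof.
rewrite /al_w -map_comp (ax_cod_comp A al_e) -al_size_y /mkseq -val_enum_ord -map_comp.
apply: eq_map => i /=.
exact: (ax_dom_fibm A al_e (al_ar i)).
Qed.

Definition alpha_fun : TElt X (ten Y Z) := TE (tx s) (comp psi phi) al_w al_cod al_fib.

Lemma alpha_bd : dom (tphi alpha_fun) = dom (tphi t).
Proof. exact: (ax_dom_comp A al_e). Qed.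

End Alpha.

Definition alpha (X Y Z : CObj C) : CHom (ten (ten X Y) Z) (ten X (ten Y Z)) :=
  @CH C (ten (ten X Y) Z) (ten X (ten Y Z)) (@alpha_fun X Y Z) (@alpha_bd X Y Z).

Definition Coll : SkewData :=
  {| sObj := CObj C; sHom := @CHom C; sid := CidH; scomp := CcompH;
     sten := @ten C; stenm := tenm; sU := CU;
     salpha := alpha; slam := lam; srho := rho |}.

End Coll.

(** An element of [(X * Y)_c] is a triple [(x, phi, (y_i)_i)] with [phi : c -> d], and the
    structure maps of [Coll_C(Set)] only recombine such data by composing arrows and taking
    fibres.  Each skew monoidal axiom thus reduces to an axiom of operadic categories: the
    pentagon to functoriality of the fibre functors and the double slice condition, which
    regroups the [z]'s along fibres of fibres; the unit axioms to the triviality of fibres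
    of identities.  A strict operadic functor preserves all these data, so it induces an
    opmonoidal functor whose comparison maps are identities on underlying sets.  Finally
    [lambda (u, phi, [:: x]) = x] forgets the arrow [phi : c -> u] to a trivial object, so
    [lambda] is invertible exactly when every object has a unique arrow to a trivial
    object, which is a reformulation of genuineness. *)

From Stdlib Require Import ProofIrrelevance FunctionalExtensionality IndefiniteDescription.
From mathcomp Require Import all_boot.
Set Implicit Arguments.
Unset Strict Implicit.
Unset Printing Implicit Defensive.

Lemma eq_from_nth_any (T : Type) (s1 s2 : seq T) :
  size s1 = size s2 -> (forall x0 i, i < size s1 -> nth x0 s1 i = nth x0 s2 i) ->
  s1 = s2.
Proof.
case: s1 => [|a s1]; first by case: s2.
by move=> eq_sz eq_nth; apply: (eq_from_nth (x0 := a) eq_sz (eq_nth a)).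
Qed.

Lemma inhabited_of_lt_size (T : Type) (s : seq T) i : i < size s -> inhabited T.
Proof. by case: s => // a _ _; exact: inhabits a. Qed.

Lemma mask_map_iota (T : Type) (P : pred nat) (z : seq T) x0 :
  mask [seq P j | j <- iota 0 (size z)] z =
  map (nth x0 z) [seq j <- iota 0 (size z) | P j].
Proof.
elim: z P => [|a z IH] P //=.
rewrite -(addn0 1) iotaDl filter_map -map_comp IH.
by case: (P 0) => /=; rewrite -map_comp.
Qed.

Lemma sval_inj (T : Type) (P : T -> Prop) : injective (@sval T P).
Proof. exact: eq_sig_hprop (fun x => @proof_irrelevance (P x)). Qed.

Lemma sfib_uniq f m i : uniq (sfib f m i).
Proof. by rewrite filter_uniq // iota_uniq. Qed.

Lemma mem_sfib f m i j : (j \in sfib f m i) = (j < m) && (f j == i).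
Proof. by rewrite mem_filter mem_iota add0n andbC. Qed.

Lemma nth_sfib f m i k : k < size (sfib f m i) ->
  [/\ nth 0 (sfib f m i) k < m, f (nth 0 (sfib f m i) k) = i &
      index (nth 0 (sfib f m i) k) (sfib f m i) = k].
Proof.
move=> lt_k; have := mem_nth 0 lt_k; rewrite mem_sfib => /andP [lt_m /eqP fE].
by split => //; rewrite index_uniq // sfib_uniq.
Qed.

Lemma sfib_id f m i : i < m -> {in gtn m, f =1 id} -> sfib f m i = [:: i].
Proof.
move=> lt_im f_id; rewrite /sfib (@eq_in_filter _ _ (pred1 i)).
  by rewrite filter_pred1_uniq ?iota_uniq // mem_iota.
by move=> j; rewrite mem_iota add0n /= => lt_jm; rewrite f_id.
Qed.

Lemma sfib_const0 f m : {in gtn m, f =1 fun=> 0} -> sfib f m 0 = iota 0 m.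
Proof.
move=> f0; apply/all_filterP/allP => j; rewrite mem_iota add0n => lt_jm.
by rewrite /= f0.
Qed.

(* For [g = f1 \o f2] and [h] the map induced by [f2] from the fibre of [g] over
   [k] to the fibre of [f1] over [k] (both numbered by position), the fibres of
   [h] are the fibres of [f2]. *)
Lemma sfib_induced (f1 f2 g h : nat -> nat) na n k l :
  {in gtn n, g =1 f1 \o f2} -> {in gtn n, forall j, f2 j < na} ->
  {in gtn (size (sfib g n k)), forall m,
     h m = index (f2 (nth 0 (sfib g n k) m)) (sfib f1 na k)} ->
  l < size (sfib f1 na k) ->
  map (nth 0 (sfib g n k)) (sfib h (size (sfib g n k)) l) =
  sfib f2 n (nth 0 (sfib f1 na k) l).
Proof.
move=> gE f2_lt hE lt_l.
rewrite /sfib -/(sfib g n k) -/(sfib f1 na k).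
rewrite (@eq_in_filter _ _ (preim (nth 0 (sfib g n k))
           (fun j => index (f2 j) (sfib f1 na k) == l))); last first.
  by move=> m; rewrite mem_iota add0n /= => lt_m; rewrite hE.
rewrite -filter_map -/(mkseq _ _) mkseq_nth /sfib -filter_predI.
apply: eq_in_filter => j; rewrite mem_iota add0n /= => lt_jn.
rewrite gE //=; have := f2_lt j lt_jn; move: (f2 j) => x lt_x.
have [_ f1E idxE] := nth_sfib lt_l.
apply/andP/eqP => [[/eqP xE /eqP f1x]|->]; last by rewrite f1E idxE.
have x_in : x \in sfib f1 na k by rewrite mem_sfib lt_x f1x eqxx.
by rewrite -xE nth_index.
Qed.

Section CollBasics.
Variable C : OpCat.
Local Notation A := (ocax C).

Lemma CHom_ext (X Y : CObj C) (f g : CHom X Y) : hfun f =1 hfun g -> f = g.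
Proof.
move: f g => [f f_bd] [g g_bd] /= /functional_extensionality fg; subst g.
by rewrite (proof_irrelevance _ f_bd g_bd).
Qed.

Lemma TElt_ext (X Y : CObj C) (t1 t2 : TElt X Y) :
  tx t1 = tx t2 -> tphi t1 = tphi t2 -> ty t1 = ty t2 -> t1 = t2.
Proof.
case: t1 t2 => x1 p1 y1 c1 f1 [x2 p2 y2 c2 f2] /= ? ? ?; subst.
by rewrite (proof_irrelevance _ c1 c2) (proof_irrelevance _ f1 f2).
Qed.

Lemma size_ty (X Y : CObj C) (t : TElt X Y) : size (ty t) = ar (cod (tphi t)).
Proof. by have := congr1 size (tfib t); rewrite size_map size_mkseq. Qed.

Lemma bd_nth_ty (X Y : CObj C) (t : TElt X Y) y0 i : i < size (ty t) ->
  bd Y (nth y0 (ty t) i) = fib (tphi t) i.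
Proof.
by move=> lt_i; rewrite -(nth_map _ (bd Y y0)) // tfib nth_mkseq // -size_ty.
Qed.

Lemma trivial_fib_id (u : Ob C) : is_trivial u -> fib (idA u) 0 = u.
Proof. by case=> _ [fibE _]; rewrite fibE ?(ax_dom_id A) ?(ax_cod_id A). Qed.

Lemma trivial_cod_CU (X : CObj C) (t : TElt (CU C) X) : is_trivial (cod (tphi t)).
Proof. by rewrite -(tcod t); exact: svalP. Qed.

Lemma lamE (X : CObj C) (t : TElt (CU C) X) x0 : lam_fun t = nth x0 (ty t) 0.
Proof. by rewrite /lam_fun (tnth_nth x0). Qed.

Lemma map_sval_rho_seq (c : Ob C) : map sval (rho_seq c) = mkseq (fib (idA c)) (ar c).
Proof. by have := rho_fib c; rewrite (ax_cod_id A). Qed.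

Lemma size_rho_seq (c : Ob C) : size (rho_seq c) = ar c.
Proof. by have := congr1 size (map_sval_rho_seq c); rewrite size_map size_mkseq. Qed.

Lemma sval_nth_rho_seq (c : Ob C) u0 i : i < ar c ->
  sval (nth u0 (rho_seq c) i) = fib (idA c) i.
Proof.
by move=> lt_i; rewrite -(nth_map u0 (sval u0)) ?size_rho_seq // map_sval_rho_seq nth_mkseq.
Qed.

Lemma size_al_w (X Y Z : CObj C) (t : TElt (ten X Y) Z) :
  size (al_w t) = size (ty (tx t)).
Proof. by rewrite /al_w size_map size_enum_ord. Qed.

Lemma nth_al_w (X Y Z : CObj C) (t : TElt (ten X Y) Z) w0 y0 i :
  i < size (ty (tx t)) ->
  [/\ tx (nth w0 (al_w t) i) = nth y0 (ty (tx t)) i,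
      tphi (nth w0 (al_w t) i) = fibm (tphi (tx t)) (tphi t) i &
      ty (nth w0 (al_w t) i) = al_zmask t i].
Proof.
move=> lt_i; rewrite /al_w (nth_map (Ordinal lt_i)) ?size_enum_ord //=.
by rewrite (tnth_nth y0) /= nth_enum_ord.
Qed.

Lemma al_zmaskE (X Y Z : CObj C) (t : TElt (ten X Y) Z) z0 i :
  al_zmask t i =
  map (nth z0 (ty t)) (sfib (am (tphi (tx t))) (ar (dom (tphi (tx t)))) i).
Proof. by rewrite /al_zmask (mask_map_iota _ _ z0) (al_size_z t). Qed.

Lemma size_al_zmask (X Y Z : CObj C) (t : TElt (ten X Y) Z) i :
  size (al_zmask t i) = size (sfib (am (tphi (tx t))) (ar (dom (tphi (tx t)))) i).
Proof.
by rewrite /al_zmask size_mask ?size_map ?size_iota // count_map size_filter al_size_z.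
Qed.

End CollBasics.

Section SkewMonoidal.
Variable C : OpCat.
Local Notation A := (ocax C).

Lemma al_w_tenm (X X' Y Y' Z Z' : CObj C) (f : CHom X X') (g : CHom Y Y')
  (h : CHom Z Z') (t : TElt (ten X Y) Z) :
  al_w (tenm_fun (tenm f g) h t) = map (tenm_fun g h) (al_w t).
Proof.
apply: eq_from_nth_any => [|w0 i].
  by rewrite (size_map (tenm_fun g h)) !size_al_w /= size_map.
rewrite size_al_w /= size_map => lt_i.
have [y0] := inhabited_of_lt_size lt_i.
have lt_iw : i < size (al_w t) by rewrite size_al_w.
have [v0] := inhabited_of_lt_size lt_iw.
rewrite (nth_map v0) //.
have [x1 phi1 z1] := nth_al_w v0 y0 lt_i.
have lt_i' : i < size (ty (tx (tenm_fun (tenm f g) h t))) by rewrite /= size_map.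
have [x2 phi2 z2] := nth_al_w w0 (hfun g y0) lt_i'.
apply: TElt_ext => /=.
- by rewrite x1 x2 /= (nth_map y0).
- by rewrite phi1 phi2.
- by rewrite z1 z2 /al_zmask /= size_map map_mask.
Qed.

Lemma Coll_lam_alpha (Y Z : CObj C) (t : TElt (ten (CU C) Y) Z) :
  lam_fun (alpha_fun t) = tenm_fun (lam Y) (CidH Z) t.
Proof.
have triv := trivial_cod_CU (tx t).
have lt_0 : 0 < size (ty (tx t)) by rewrite size_ty; case: triv => ->.
have lt_0w : 0 < size (al_w t) by rewrite size_al_w.
have [w0] := inhabited_of_lt_size lt_0w.
have [y0] := inhabited_of_lt_size lt_0.
have [x1 phi1 z1] := nth_al_w w0 y0 lt_0.
rewrite (lamE _ w0) /=; apply: TElt_ext => /=.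
- by rewrite x1 (lamE _ y0).
- by rewrite phi1; case: triv => _ [_ ->] //; exact: al_e.
rewrite z1 map_id.
have [|] := boolP (0 < size (ty t)); last first.
  by rewrite -eqn0Ngt => /eqP /size0nil ty_nil; rewrite /al_zmask ty_nil.
move=> /inhabited_of_lt_size [z0]; rewrite (al_zmaskE _ z0) sfib_const0.
  by rewrite -(al_size_z t); exact: mkseq_nth.
move=> j lt_j; have := ax_am_range A lt_j; case: triv => -> _.
by rewrite ltnS leqn0 => /eqP.
Qed.

Lemma al_zmask_rho (X Y : CObj C) (t : TElt X Y) i : i < ar (cod (tphi t)) ->
  al_zmask (@rho_fun C (ten X Y) t) i = rho_seq (fib (tphi t) i).
Proof.
move=> lt_i; apply: (inj_map (@sval_inj _ _)).
rewrite map_sval_rho_seq /al_zmask map_mask map_sval_rho_seq /=.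
have szE : size (rho_seq (dom (tphi t))) =
           size (mkseq (fib (idA (dom (tphi t)))) (ar (dom (tphi t)))).
  by rewrite size_rho_seq size_mkseq.
rewrite szE (mask_map_iota _ _ (dom (tphi t))) size_mkseq -/(sfib _ _ _).
apply: (@eq_from_nth _ (dom (tphi t))).
  by rewrite size_map size_mkseq (ax_ar_fib A).
move=> k; rewrite size_map => lt_k.
have [lt_j amE idxE] := nth_sfib lt_k.
rewrite (nth_map 0) // nth_mkseq // nth_mkseq; last by rewrite (ax_ar_fib A).
rewrite (ax_ds_ob A (psi := tphi t) (phi := idA (dom (tphi t)))) ?(ax_cod_id A) //.
by rewrite /spos amE idxE (ax_fibm_id A).
Qed.

Lemma al_w_rho (X Y : CObj C) (t : TElt X Y) :
  al_w (@rho_fun C (ten X Y) t) = map (@rho_fun C Y) (ty t).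
Proof.
apply: eq_from_nth_any => [|w0 i]; first by rewrite size_al_w size_map.
rewrite size_al_w /= => lt_i.
have [y0] := inhabited_of_lt_size lt_i.
have [x1 phi1 z1] := nth_al_w (t := @rho_fun C (ten X Y) t) w0 y0 lt_i.
have lt_i' : i < ar (cod (tphi t)) by rewrite -size_ty.
rewrite (nth_map y0) //; apply: TElt_ext => /=.
- by rewrite x1.
- by rewrite phi1 /= bd_nth_ty // (ax_fibm_id A).
- by rewrite z1 bd_nth_ty // al_zmask_rho.
Qed.

Lemma Coll_triangle (X Y : CObj C) (t : TElt X Y) :
  tenm_fun (CidH X) (lam Y) (alpha_fun (tenm_fun (rho X) (CidH Y) t)) = t.
Proof.
apply: TElt_ext => //=; first by rewrite (tcod t) (ax_comp_id_l A).
apply: eq_from_nth_any => [|x0 i].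
  by rewrite size_map size_al_w /= size_rho_seq (tcod t) size_ty.
rewrite size_map => lt_iw; have [w0] := inhabited_of_lt_size lt_iw.
move: (lt_iw); rewrite size_al_w => lt_i; have [u0] := inhabited_of_lt_size lt_i.
rewrite (nth_map w0) // (lamE _ x0).
have [_ _ ->] := nth_al_w w0 u0 lt_i.
rewrite (al_zmaskE _ x0) /= (ax_dom_id A) sfib_id //=.
- by rewrite map_id.
- by move: (lt_i); rewrite size_rho_seq.
- by move=> j lt_j; rewrite (ax_am_id A).
Qed.

Section Pentagon.
Variables W X Y Z : CObj C.
Variable t : TElt (ten (ten W X) Y) Z.
Local Notation psi1 := (tphi (tx (tx t))).
Local Notation psi2 := (tphi (tx t)).
Local Notation t' := (tenm_fun (alpha W X Y) (CidH Z) t).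

Let e12 : cod psi2 = dom psi1 := al_e (tx t).
Let e23 : cod (tphi t) = dom psi2 := al_e t.

Lemma pentagon_zmask m0 k l : k < ar (cod psi1) ->
  l < size (sfib (am psi1) (ar (dom psi1)) k) ->
  al_zmask t (nth 0 (sfib (am psi1) (ar (dom psi1)) k) l) =
  al_zmask (nth m0 (al_w t') k) l.
Proof.
move=> lt_k lt_l.
have lt_kw : k < size (ty (tx t')) by rewrite /= size_al_w size_ty.
have [n0] := inhabited_of_lt_size lt_kw.
have [m_x _ m_z] := nth_al_w m0 n0 lt_kw.
have [|] := boolP (0 < size (ty t)); last first.
  by rewrite -eqn0Ngt => /eqP /size0nil ty_nil; rewrite /al_zmask m_z /al_zmask /= ty_nil.
move=> /inhabited_of_lt_size [z0].
have lt_kv : k < size (ty (tx (tx t))) by rewrite size_ty.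
have [_ n_phi _] := nth_al_w n0 (tx n0) lt_kv.
rewrite !(al_zmaskE _ z0) m_z m_x (al_zmaskE _ z0) /= n_phi map_id.
have lt_k' : k < ar (cod (comp psi1 psi2)) by rewrite (ax_cod_comp A e12).
rewrite (ax_dom_fibm A e12 lt_k) (ax_ar_fib A lt_k') (ax_dom_comp A e12).
rewrite -(@sfib_induced (am psi1) (am psi2) (am (comp psi1 psi2))
            (am (fibm psi1 psi2 k))) //.
- rewrite -map_comp; apply/eq_in_map => m; rewrite mem_sfib => /andP [lt_m _] /=.
  by rewrite (nth_map 0).
- by move=> j lt_j; rewrite (ax_am_comp A e12).
- by move=> j lt_j; rewrite -e12; apply: (ax_am_range A).
- move=> m lt_m; rewrite (ax_am_fibm A e12 lt_k) //.
  by rewrite (ax_ar_fib A lt_k') (ax_dom_comp A e12).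
Qed.

Lemma pentagon_al_zmask m0 k : k < size (ty (tx (tx t))) ->
  al_zmask (alpha_fun t) k = al_w (nth m0 (al_w t') k).
Proof.
move=> lt_k; have lt_k' : k < ar (cod psi1) by rewrite -size_ty.
have lt_kw : k < size (ty (tx t')) by rewrite /= size_al_w.
have [n0] := inhabited_of_lt_size lt_kw.
have [x0] := inhabited_of_lt_size lt_k.
have [m_x m_phi m_z] := nth_al_w m0 n0 lt_kw.
have [n_x n_phi n_z] := nth_al_w (t := tx t) n0 x0 lt_k.
apply: eq_from_nth_any => [|v0 l].
  by rewrite size_al_w m_x n_z (size_al_zmask (alpha_fun t)) size_al_zmask.
rewrite (size_al_zmask (alpha_fun t)) /= => lt_l.
have [lt_j amE idxE] := nth_sfib lt_l.
rewrite (al_zmaskE (alpha_fun t) v0) /= (nth_map 0) //.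
set j := nth 0 _ l in lt_j amE idxE *.
have lt_jy : j < size (ty (tx t)) by rewrite size_ty e12.
have [y0] := inhabited_of_lt_size lt_jy.
have lt_lm : l < size (ty (tx (nth m0 (al_w t') k))) by rewrite m_x n_z size_al_zmask.
have [v_x v_phi v_z] := nth_al_w v0 y0 lt_jy.
have [w_x w_phi w_z] := nth_al_w v0 y0 lt_lm.
apply: TElt_ext.
- by rewrite v_x w_x m_x n_z (al_zmaskE _ y0) (nth_map 0).
- by rewrite v_phi w_phi m_x n_phi m_phi (ax_ds_mor A e12 e23 lt_j) /spos amE idxE.
- by rewrite v_z w_z; exact: pentagon_zmask.
Qed.

Lemma pentagon_al_w :
  al_w (alpha_fun t) = map (@alpha_fun C X Y Z) (al_w t').
Proof.
apply: eq_from_nth_any => [|w0 k].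
  by rewrite (size_map (@alpha_fun C X Y Z)) !size_al_w.
rewrite size_al_w /= => lt_k.
have lt_kw : k < size (al_w t') by rewrite !size_al_w.
have [m0] := inhabited_of_lt_size lt_kw.
have [x0] := inhabited_of_lt_size lt_k.
have lt_kn : k < size (ty (tx t')) by rewrite /= size_al_w.
have [n0] := inhabited_of_lt_size lt_kn.
have [a_x a_phi a_z] := nth_al_w (t := alpha_fun t) w0 x0 lt_k.
have [m_x m_phi _] := nth_al_w m0 n0 lt_kn.
have [n_x n_phi _] := nth_al_w (t := tx t) n0 x0 lt_k.
have lt_k' : k < ar (cod psi1) by rewrite -size_ty.
rewrite (nth_map m0) //; apply: TElt_ext => /=.
- by rewrite a_x m_x n_x.
- by rewrite a_phi m_x n_phi m_phi (ax_fibm_comp A e12 e23 lt_k').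
- by rewrite a_z (pentagon_al_zmask m0).
Qed.

Lemma Coll_pentagon :
  alpha_fun (alpha_fun t) = tenm_fun (CidH W) (alpha X Y Z) (alpha_fun t').
Proof.
apply: TElt_ext => //=; last exact: pentagon_al_w.
by rewrite (ax_comp_assoc A e23 e12).
Qed.

End Pentagon.

Theorem Coll_skew_monoidal : is_skew_monoidal (Coll C).
Proof.
constructor.
- by move=> X Y f; apply: CHom_ext.
- by move=> X Y f; apply: CHom_ext.
- by move=> X Y Z W f g h; apply: CHom_ext.
- by move=> X Y; apply: CHom_ext => t; apply: TElt_ext => //=; rewrite map_id.
- move=> X X' X'' Y Y' Y'' f f' g g'; apply: CHom_ext => t; apply: TElt_ext => //=.
  by rewrite map_comp.
- move=> X X' Y Y' Z Z' f g h; apply: CHom_ext => t; apply: TElt_ext => //=.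
  by rewrite al_w_tenm.
- move=> X Y f; apply: CHom_ext => t /=.
  have [x0] := inhabited_of_lt_size (lam_size t).
  by rewrite (lamE t x0) (lamE _ (hfun f x0)) /= (nth_map x0) ?lam_size.
- by move=> X Y f; apply: CHom_ext => x; apply: TElt_ext => //=; rewrite ?map_id (hbd f x).
- apply: CHom_ext => u /=; apply: sval_inj.
  have [ar_u _] := svalP u.
  by rewrite (lamE _ u) sval_nth_rho_seq ?ar_u // trivial_fib_id //; exact: svalP.
- by move=> Y Z; apply: CHom_ext => t; exact: Coll_lam_alpha.
- move=> X Y; apply: CHom_ext => t; apply: TElt_ext => //=; last exact: al_w_rho.
  by rewrite (ax_comp_id_r A).
- by move=> X Y; apply: CHom_ext => t; exact: Coll_triangle.
- by move=> W X Y Z; apply: CHom_ext => t; exact: Coll_pentagon.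
Qed.

End SkewMonoidal.

Section CollFunctor.
Variables (C D : OpCat) (F : SOpFun C D).
Local Notation Fo := (sfo F).
Local Notation Fa := (sfa F).

Lemma sfa_dom f : dom (Fa f) = Fo (dom f).
Proof. by case: (sfax F) => FE _ _ _ _; case: (FE f). Qed.

Lemma sfa_cod f : cod (Fa f) = Fo (cod f).
Proof. by case: (sfax F) => FE _ _ _ _; case: (FE f). Qed.

Lemma sfa_id c : Fa (idA c) = idA (Fo c).
Proof. by case: (sfax F). Qed.

Lemma sfa_comp g f : cod f = dom g -> Fa (comp g f) = comp (Fa g) (Fa f).
Proof. by case: (sfax F) => _ _ FE _ _; apply: FE. Qed.

Lemma ar_sfo c : ar (Fo c) = ar c.
Proof. by case: (sfax F) => _ _ _ [FE _] _. Qed.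

Lemma am_sfa f j : j < ar (dom f) -> am (Fa f) j = am f j.
Proof. by case: (sfax F) => _ _ _ [_ FE] _; apply: FE. Qed.

Lemma fib_sfa psi i : i < ar (cod psi) -> fib (Fa psi) i = Fo (fib psi i).
Proof. by case: (sfax F) => _ _ _ _ [FE _]; apply: FE. Qed.

Lemma fibm_sfa psi phi i : cod phi = dom psi -> i < ar (cod psi) ->
  fibm (Fa psi) (Fa phi) i = Fa (fibm psi phi i).
Proof. by case: (sfax F) => _ _ _ _ [_ FE]; apply: FE. Qed.

(* [u] is the fibre of its identity, and [F] preserves identities and fibres. *)
Lemma sfo_trivial u : is_trivial u -> is_trivial (Fo u).
Proof.
move=> triv; have [ar_u _] := triv.
have -> : Fo u = fib (idA (Fo u)) 0.
  by rewrite -sfa_id fib_sfa ?trivial_fib_id // (ax_cod_id (ocax C)) ar_u.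
by apply: (ax_fib_id_trivial (ocax D)); rewrite ar_sfo ar_u.
Qed.

Definition Coll_ob (X : CObj C) : CObj D := CO (car X) (fun x => Fo (bd X x)).

Definition Coll_hom (X Y : CObj C) (f : CHom X Y) : CHom (Coll_ob X) (Coll_ob Y) :=
  @CH D (Coll_ob X) (Coll_ob Y) (hfun f) (fun x => f_equal Fo (hbd f x)).

Lemma Coll_f2_cod (X Y : CObj C) (t : TElt X Y) :
  bd (Coll_ob X) (tx t) = cod (Fa (tphi t)).
Proof. by rewrite sfa_cod /= (tcod t). Qed.

Lemma Coll_f2_fib (X Y : CObj C) (t : TElt X Y) :
  map (bd (Coll_ob Y)) (ty t) = mkseq (fib (Fa (tphi t))) (ar (cod (Fa (tphi t)))).
Proof.
rewrite sfa_cod ar_sfo (map_comp Fo (bd Y)) tfib /mkseq -map_comp.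
by apply/eq_in_map => i; rewrite mem_iota add0n /= => lt_i; rewrite fib_sfa.
Qed.

Definition Coll_f2_fun (X Y : CObj C) (t : TElt X Y) : TElt (Coll_ob X) (Coll_ob Y) :=
  @TE D (Coll_ob X) (Coll_ob Y) (tx t) (Fa (tphi t)) (ty t) (Coll_f2_cod t) (Coll_f2_fib t).

Definition Coll_f2 (X Y : CObj C) :
  CHom (Coll_ob (ten X Y)) (ten (Coll_ob X) (Coll_ob Y)) :=
  @CH D (Coll_ob (ten X Y)) (ten (Coll_ob X) (Coll_ob Y)) (@Coll_f2_fun X Y)
    (fun t => sfa_dom (tphi t)).

Definition Coll_f0 : CHom (Coll_ob (CU C)) (CU D) :=
  @CH D (Coll_ob (CU C)) (CU D)
    (fun u => exist _ (Fo (sval u)) (sfo_trivial (svalP u))) (fun u => erefl).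

Definition Coll_fun : OpMonData (Coll C) (Coll D) :=
  @Build_OpMonData (Coll C) (Coll D) Coll_ob Coll_hom Coll_f2 Coll_f0.

Lemma al_w_Coll_f2 (X Y Z : CObj C) (t : TElt (ten X Y) Z) :
  al_w (tenm_fun (Coll_f2 X Y) (CidH (Coll_ob Z)) (Coll_f2_fun t)) =
  map (@Coll_f2_fun Y Z) (al_w t).
Proof.
apply: eq_from_nth_any => [|w0 i].
  by rewrite (size_map (@Coll_f2_fun Y Z)) !size_al_w.
rewrite size_al_w /= => lt_i.
have lt_iw : i < size (al_w t) by rewrite size_al_w.
have [v0] := inhabited_of_lt_size lt_iw.
have [y0] := inhabited_of_lt_size lt_i.
rewrite (nth_map v0) //.
have [a_x a_phi a_z] :=
  nth_al_w (t := tenm_fun (Coll_f2 X Y) (CidH (Coll_ob Z)) (Coll_f2_fun t)) w0 y0 lt_i.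
have [b_x b_phi b_z] := nth_al_w v0 y0 lt_i.
apply: TElt_ext => /=.
- by rewrite a_x b_x.
- by rewrite a_phi b_phi /= fibm_sfa ?(al_e t) // -size_ty.
rewrite a_z b_z /al_zmask /= map_id; congr mask.
apply/eq_in_map => j; rewrite mem_iota add0n /= => lt_j.
by rewrite am_sfa // -(al_size_z t).
Qed.

Lemma Coll_fun_opmonoidal : is_opmonoidal Coll_fun.
Proof.
constructor.
- by move=> X; apply: CHom_ext.
- by move=> X Y Z f g; apply: CHom_ext.
- by move=> X X' Y Y' f g; apply: CHom_ext => t; apply: TElt_ext.
- move=> X Y Z; apply: CHom_ext => t /=; apply: TElt_ext => //=.
    by rewrite sfa_comp //; exact: al_e.
  exact: al_w_Coll_f2.
- move=> X; apply: CHom_ext => t /=.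
  have [x0] := inhabited_of_lt_size (lam_size t).
  rewrite (lamE t x0) (lamE (tenm_fun Coll_f0 (CidH (Coll_ob X)) (Coll_f2_fun t)) x0).
  by rewrite /= map_id.
- move=> X; apply: CHom_ext => x /=; apply: TElt_ext => //=; first by rewrite sfa_id.
  apply: (inj_map (@sval_inj _ _)); rewrite -map_comp (map_comp Fo sval).
  rewrite !map_sval_rho_seq ar_sfo /mkseq -map_comp; apply/eq_in_map => i.
  rewrite mem_iota add0n /= => lt_i.
  by rewrite -sfa_id fib_sfa // (ax_cod_id (ocax C)).
Qed.

End CollFunctor.

Lemma Coll_fun_id (C : OpCat) : Coll_fun (idSF C) = idOpMon (Coll C).
Proof.
have homE : @Coll_hom C C (idSF C) = (fun X Y (f : CHom X Y) => f).
  do 2![apply: functional_extensionality_dep => ?].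
  by apply: functional_extensionality => f; apply: CHom_ext.
have f2E : @Coll_f2 C C (idSF C) = (fun X Y => CidH (ten X Y)).
  do 2![apply: functional_extensionality_dep => ?].
  by apply: CHom_ext => t; apply: TElt_ext.
have f0E : @Coll_f0 C C (idSF C) = CidH (CU C).
  by apply: CHom_ext => u; apply: sval_inj.
by rewrite /Coll_fun homE f2E f0E.
Qed.

Lemma Coll_fun_comp (C D E : OpCat) (F : SOpFun C D) (G : SOpFun D E) :
  Coll_fun (compSF G F) = compOpMon (Coll_fun G) (Coll_fun F).
Proof.
have homE : @Coll_hom C E (compSF G F) =
            (fun X Y (f : CHom X Y) => Coll_hom G (Coll_hom F f)).
  do 2![apply: functional_extensionality_dep => ?].
  by apply: functional_extensionality => f; apply: CHom_ext.
have f2E : @Coll_f2 C E (compSF G F) =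
   (fun X Y => CcompH (Coll_f2 G (Coll_ob F X) (Coll_ob F Y)) (Coll_hom G (Coll_f2 F X Y))).
  do 2![apply: functional_extensionality_dep => ?].
  by apply: CHom_ext => t; apply: TElt_ext.
have f0E : @Coll_f0 C E (compSF G F) = CcompH (Coll_f0 G) (Coll_hom G (Coll_f0 F)).
  by apply: CHom_ext => u; apply: sval_inj.
by rewrite /Coll_fun homE f2E f0E.
Qed.

Section Genuine.
Variable C : OpCat.
Local Notation A := (ocax C).

Definition unique_arrow_to_trivial (c : Ob C) (f : Arr C) : Prop :=
  [/\ dom f = c, is_trivial (cod f) &
      forall g, dom g = c -> is_trivial (cod g) -> g = f].

Definition unique_arrows_to_trivial : Prop :=
  forall c : Ob C, exists f, unique_arrow_to_trivial c f.

Lemma genuine_unique_arrows : genuine C -> unique_arrows_to_trivial.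
Proof.
move=> gen c; have [u [conn_cu triv_u uniq_u term_u]] := gen c.
have [f [[dom_f cod_f] uniq_f]] := term_u c conn_cu.
exists f; split; rewrite ?cod_f // => g dom_g triv_g.
apply/esym/uniq_f; split=> //; apply: uniq_u triv_g.
by rewrite -dom_g; exact: conn_arr.
Qed.

Section UniqueArrows.
Hypothesis uniq_arrows : unique_arrows_to_trivial.

Lemma unique_arrow_id (u : Ob C) : is_trivial u -> unique_arrow_to_trivial u (idA u).
Proof.
move=> triv_u; have [f [dom_f _ uniq_f]] := uniq_arrows u.
have triv_id : is_trivial (cod (idA u)) by rewrite (ax_cod_id A).
split=> [|//|g dom_g triv_g]; first exact: (ax_dom_id A).
by rewrite (uniq_f g) // (uniq_f (idA u)) // (ax_dom_id A).
Qed.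

(* The arrow out of [dom h] factors through [h], hence has the same target. *)
Lemma connected_unique_arrow_cod a b : connected a b ->
  forall fa fb, unique_arrow_to_trivial a fa -> unique_arrow_to_trivial b fb ->
  cod fa = cod fb.
Proof.
elim=> {a b} [c|h|a b _ IH|a b c _ IH1 _ IH2] fa fb.
- by move=> [_ _ uniq_a] [dom_b triv_b _]; rewrite (uniq_a fb).
- move=> [dom_a _ uniq_a] [dom_b triv_b _].
  have hb : cod h = dom fb by rewrite dom_b.
  by rewrite -(uniq_a (comp fb h)) ?(ax_cod_comp A hb) ?(ax_dom_comp A hb).
- by move=> sa sb; rewrite (IH _ _ sb sa).
- move=> sa sc; have [fm sm] := uniq_arrows b.
  by rewrite (IH1 _ _ sa sm) (IH2 _ _ sm sc).
Qed.

Lemma unique_arrows_genuine : genuine C.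
Proof.
move=> c; have [f sf] := uniq_arrows c; have [dom_f triv_f uniq_f] := sf.
exists (cod f); split => //.
- by rewrite -{1}dom_f; exact: conn_arr.
- move=> u conn_cu triv_u.
  by rewrite (connected_unique_arrow_cod conn_cu sf (unique_arrow_id triv_u)) (ax_cod_id A).
- move=> c' conn_c'; have [f' sf'] := uniq_arrows c'; have [dom_f' triv_f' uniq_f'] := sf'.
  have cod_f' := connected_unique_arrow_cod conn_c' sf' (unique_arrow_id triv_f).
  rewrite (ax_cod_id A) in cod_f'.
  by exists f'; split => // g [dom_g cod_g]; apply/esym/uniq_f' => //; rewrite cod_g.
Qed.

End UniqueArrows.

Lemma singleton_fib (X : CObj C) (x : car X) (f : Arr C) :
  dom f = bd X x -> is_trivial (cod f) -> map (bd X) [:: x] = mkseq (fib f) (ar (cod f)).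
Proof. by move=> dom_f [ar_f [fibE _]]; rewrite ar_f /mkseq /= (fibE f) ?dom_f. Qed.

Definition singleton_TElt (X : CObj C) (x : car X) (f : Arr C) (dom_f : dom f = bd X x)
  (triv_f : is_trivial (cod f)) : TElt (CU C) X :=
  @TE C (CU C) X (exist _ (cod f) triv_f) f [:: x] erefl (singleton_fib dom_f triv_f).

(* Test invertibility of [lam] on the one-point set lying over [c]: every element of
   [U * X] over [c] is then [(u, f, [:: tt])], determined by [f : c -> u]. *)
Lemma lam_invertible_unique_arrows :
  lambda_invertible (Coll C) -> unique_arrows_to_trivial.
Proof.
move=> lam_inv c; pose X : CObj C := CO unit (fun _ => c).
have [g [gK _]] := lam_inv X; pose t := hfun g tt.
exists (tphi t); split; [exact: hbd g tt | exact: trivial_cod_CU |].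
move=> f dom_f triv_f; pose s := @singleton_TElt X tt f dom_f triv_f.
have /= sE := f_equal (fun h : CHom (ten (CU C) X) (ten (CU C) X) => hfun h s) gK.
by rewrite -[f]/(tphi s) -sE /=; case: (lam_fun s).
Qed.

Section LamInverse.
Variable arrow : forall c : Ob C, {f : Arr C | unique_arrow_to_trivial c f}.

Definition lam_inv_fun (X : CObj C) (x : car X) : TElt (CU C) X :=
  let: And3 dom_f triv_f _ := svalP (arrow (bd X x)) in singleton_TElt dom_f triv_f.

Lemma lam_inv_bd (X : CObj C) (x : car X) : dom (tphi (lam_inv_fun x)) = bd X x.
Proof. by rewrite /lam_inv_fun; case: (svalP (arrow (bd X x))). Qed.

Definition lam_inv (X : CObj C) : CHom X (ten (CU C) X) :=
  @CH C X (ten (CU C) X) (@lam_inv_fun X) (@lam_inv_bd X).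

Lemma lam_is_iso (X : CObj C) : is_iso (slam (s := Coll C) X).
Proof.
exists (lam_inv X); split; apply: CHom_ext => /=; last first.
  by move=> x; rewrite (lamE _ x) /lam_inv_fun; case: (svalP (arrow (bd X x))).
move=> t; have [x0] := inhabited_of_lt_size (lam_size t).
have [ar_t _] := trivial_cod_CU t.
have tyE : ty t = [:: lam_fun t].
  by rewrite (lamE t x0); move: (size_ty t); rewrite ar_t; case: (ty t) => [|a []].
have arrowE : sval (arrow (bd X (lam_fun t))) = tphi t.
  have [_ _ uniq_f] := svalP (arrow (bd X (lam_fun t))).
  by apply/esym/uniq_f; [rewrite lam_bd | exact: trivial_cod_CU].
rewrite /lam_inv_fun; case: (svalP _) => dom_f triv_f _.
apply: TElt_ext => /=; last by rewrite tyE.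
- by apply: sval_inj; rewrite /= arrowE -(tcod t).
- exact: arrowE.
Qed.

End LamInverse.

Theorem genuine_iff_lambda_invertible : genuine C <-> lambda_invertible (Coll C).
Proof.
split=> [/genuine_unique_arrows uniq_arrows X|/lam_invertible_unique_arrows].
  apply: lam_is_iso => c; apply: constructive_indefinite_description; exact: uniq_arrows.
exact: unique_arrows_genuine.
Qed.

End Genuine.

Theorem theorem5p1 :
  (* each Coll_C(Set) is a skew monoidal category (an object of SkewMonCat) *)
  (forall C : OpCat, is_skew_monoidal (Coll C)) /\
  (* there is a functor Coll : OpCat -> SkewMonCat with object part C |-> Coll_C(Set) *)
  (exists CollF : forall (C D : OpCat), SOpFun C D -> OpMonData (Coll C) (Coll D),
     [/\ (forall (C D : OpCat) (F : SOpFun C D), is_opmonoidal (CollF C D F)),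
         (forall C : OpCat, CollF C C (idSF C) = idOpMon (Coll C)) &
         (forall (C D E : OpCat) (F : SOpFun C D) (G : SOpFun D E),
            CollF C E (compSF G F) = compOpMon (CollF D E G) (CollF C D F))]) /\
  (* genuine iff the left unit constraint of Coll_C(Set) is invertible *)
  (forall C : OpCat, genuine C <-> lambda_invertible (Coll C)).
Proof.
split; first exact: Coll_skew_monoidal.
split; last exact: genuine_iff_lambda_invertible.
exists Coll_fun; split.
- exact: Coll_fun_opmonoidal.
- exact: Coll_fun_id.
- exact: Coll_fun_comp.
Qed.
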